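(* Let $G$ be a signature that is not IM-terraced but all of whose pinnings $G_p$ with $\mathrm{dom}(p)\ne\emptyset$ are IM-terraced. Then $G$ is equivalent (by renaming variables) to a signature $F$ on $\{1,\dots,k\}$ such that: (a) the pinning of $F$ by $\{1\mapsto0,2\mapsto1\}$ is identically zero; and (b) there exist a configuration $z\in\{0,1\}^{\{3,\dots,k\}}$ and a non-degenerate signature $T:\{0,1\}^2\to\mathbb R_{\ge0}$ such that for all $x,y_3,\dots,y_k\in\{0,1\}$, $F(x,x,y_3,\dots,y_k)=T(y_3,x)$ if $y=z$ or $y=\overline z$, and $F(x,x,y_3,\dots,y_k)=0$ otherwise, where $y=(y_3,\dots,y_k)$.
   Context: A signature on $V$ is a function $\{0,1\}^V\to\mathbb R_{\ge0}$. A partial configuration $p$ is an element of $\{0,1\}^{\mathrm{dom}(p)}$ with $\mathrm{dom}(p)\subseteq V$; the pinning $F_p$ on $V\setminus\mathrm{dom}(p)$ is $F_p(x)=F(x,p)$; $p^{\{i\}}$ is $p$ with coordinate $i$ flipped. $F$ is IM-terraced if for every partial configuration $p$ and all $i,j\in\mathrm{dom}(p)$ with $p_i\ne p_j$: if $F_p$ is identically zero then $F_{p^{\{i\}}}$ and $F_{p^{\{j\}}}$ are linearly dependent (one is a scalar multiple of the other). An arity-2 signature $T$ is degenerate if $T(a,b)=U(a)U'(b)$ for some functions $U,U'$. $\overline z_i=1-z_i$. *)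

From mathcomp Require Import all_boot.
From Stdlib Require Import Reals.
Set Implicit Arguments. Unset Strict Implicit. Unset Printing Implicit Defensive.
Open Scope R_scope.

(* A signature on a finite variable set V is a function {0,1}^V -> R
   (nonnegativity is imposed as an explicit hypothesis where needed). *)

Definition free_var (V : finType) (D : {set V}) : finType := {v : V | v \in ~: D}.

(* A partial configuration with domain D is given by (D, p), where only the
   values of p : {ffun V -> bool} on D are relevant.  merge D p x is the full
   configuration agreeing with p on D and with x off D. *)
Definition merge (V : finType) (D : {set V}) (p : {ffun V -> bool})
  (x : {ffun free_var D -> bool}) : {ffun V -> bool} :=
  [ffun v => match (insub v : option (free_var D)) with
             | Some u => x u
             | None => p v end].

Arguments merge {V} D p x.

Definition pin (V : finType) (F : {ffun V -> bool} -> R) (D : {set V})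
  (p : {ffun V -> bool}) : {ffun free_var D -> bool} -> R :=
  fun x => F (@merge V D p x).

Arguments pin {V} F D p x.

Definition flip (V : finType) (p : {ffun V -> bool}) (i : V) : {ffun V -> bool} :=
  [ffun v => if v == i then ~~ p v else p v].

Definition lin_dep (A : Type) (f g : A -> R) : Prop :=
  exists c : R, (forall a, f a = c * g a) \/ (forall a, g a = c * f a).

Definition IM_terraced (V : finType) (F : {ffun V -> bool} -> R) : Prop :=
  forall (D : {set V}) (p : {ffun V -> bool}) (i j : V),
    i \in D -> j \in D -> p i != p j ->
    (forall x, pin F D p x = 0) ->
    lin_dep (pin F D (flip p i)) (pin F D (flip p j)).

Definition degenerate (T : bool -> bool -> R) : Prop :=
  exists U U' : bool -> R, forall a b, T a b = U a * U' b.

(* Positions 1,2,3 (0-based 0,1,2) among k = m+3 variables. *)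
Definition pos1 (m : nat) : 'I_m.+3 := inord 0.
Definition pos2 (m : nat) : 'I_m.+3 := inord 1.
Definition pos3 (m : nat) : 'I_m.+3 := inord 2.

(* Let G be non-IM-terraced: some pinning G_p vanishes, p_i != p_j, yet
   a = G_{p^{i}} and b = G_{p^{j}} are not proportional.  Using that every
   pinning of G on a nonempty domain is IM-terraced:
   1. dom p is exactly {i, j}, oriented so that p_i = 0, p_j = 1: pinning a third
      variable of dom p would make a and b proportional [two_variable_violation];
   2. for v outside {i, j}, a and b are proportional on each slice {x | x v = c},
      again by pinning v [slice_minors];
   3. slice-wise proportionality propagates unless (a, b) vanishes outside the
      configurations agreeing off {i, j} with a fixed w0 or with its antipode
      [antipodal_support];
   4. on this support a and b only depend on the value at one more variable v3,
      which defines T; T is non-degenerate since a, b are not proportional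
      [normal_form].
   The theorem follows by renaming the variables so that i, j, v3 become the
   positions 1, 2, 3 [enumerate_with_prefix, agree_off_relabel].
   Pinnings are handled throughout as functions of full configurations (upd). *)

From Pilot Require Import Defs.
From mathcomp Require Import all_boot.
From Stdlib Require Import Reals Classical.
Open Scope R_scope.

Definition upd {V : finType} (D : {set V}) (p w : {ffun V -> bool}) : {ffun V -> bool} :=
  [ffun u => if u \in D then p u else w u].

Definition ldep_on {V : finType} (F : {ffun V -> bool} -> R) (D : {set V})
  (p p' : {ffun V -> bool}) : Prop :=
  lin_dep (fun w => F (upd D p w)) (fun w => F (upd D p' w)).

Definition IM_terraced_upd {V : finType} (F : {ffun V -> bool} -> R) : Prop :=
  forall (D : {set V}) (p : {ffun V -> bool}) (i j : V),
    i \in D -> j \in D -> p i != p j ->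
    (forall w, F (upd D p w) = 0) -> ldep_on F D (flip p i) (flip p j).

Lemma merge_in {V : finType} (D : {set V}) (p : {ffun V -> bool})
  (x : {ffun free_var D -> bool}) (u : V) : u \in D -> Defs.merge D p x u = p u.
Proof. by move=> uD; rewrite ffunE insubN // inE uD. Qed.

Lemma merge_upd {V : finType} (D : {set V}) (p q : {ffun V -> bool})
  (x : {ffun free_var D -> bool}) : Defs.merge D p x = upd D p (Defs.merge D q x).
Proof.
apply/ffunP => u; rewrite [in RHS]ffunE; case: ifP => uD; first by rewrite merge_in.
by rewrite !ffunE; case: insubP => //; rewrite inE uD.
Qed.

Lemma upd_merge {V : finType} (D : {set V}) (p w : {ffun V -> bool}) :
  upd D p w = Defs.merge D p [ffun u : free_var D => w (val u)].
Proof.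
apply/ffunP => u; rewrite [in LHS]ffunE; case: ifP => uD; first by rewrite merge_in.
rewrite !ffunE; case: insubP => [u' _ <-|]; first by rewrite ffunE.
by rewrite inE uD.
Qed.

Lemma IM_terracedP {V : finType} (F : {ffun V -> bool} -> R) :
  IM_terraced F <-> IM_terraced_upd F.
Proof.
split=> IM D p i j iD jD pij Z.
- have Z' x : pin F D p x = 0 by rewrite /pin (merge_upd D p p).
  have [c [Hc|Hc]] := IM D p i j iD jD pij Z'; exists c; [left|right]=> w;
    rewrite !upd_merge; apply: Hc.
- have Z' w : F (upd D p w) = 0 by rewrite upd_merge; apply: Z.
  have [c [Hc|Hc]] := IM D p i j iD jD pij Z'; exists c; [left|right]=> x;
    by have := Hc (Defs.merge D (flip p i) x); rewrite -!merge_upd.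
Qed.

Definition proportional {X : Type} (a b : X -> R) (x y : X) : Prop :=
  a x * b y = a y * b x.

Lemma lin_dep_of_minors {X : Type} (a b : X -> R) :
  (forall x y, proportional a b x y) -> lin_dep a b.
Proof.
move=> minors; have [[x0 bx0]|b0] := classic (exists x0, b x0 <> 0).
- exists (a x0 / b x0); left=> x; apply: (Rmult_eq_reg_r (b x0)) => //.
  have e := minors x x0; field_simplify => //; rewrite -e; field.
- exists 0; right=> x; have [->|bx] := Req_dec (b x) 0; first by ring.
  by case: b0; exists x.
Qed.

Lemma proportional_trans {X : Type} {a b : X -> R} {x y z : X} : a x <> 0 \/ b x <> 0 ->
  proportional a b x y -> proportional a b x z -> proportional a b y z.
Proof.
rewrite /proportional => -[h|h] e1 e2.
- apply: (Rmult_eq_reg_l (a x)) => //.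
  transitivity (a y * (a x * b z)); first ring; rewrite e2.
  transitivity (a z * (a x * b y)); last ring; rewrite e1; ring.
- apply: (Rmult_eq_reg_l (b x)) => //.
  transitivity (b z * (a y * b x)); first ring; rewrite -e1.
  transitivity (b y * (a z * b x)); last ring; rewrite -e2; ring.
Qed.

Section PinOneVariable.
Variables (V : finType) (G : {ffun V -> bool} -> R) (v : V) (q : {ffun V -> bool}).
Hypothesis pinned_IM : IM_terraced (pin G [set v] q).

Local Notation V1 := (free_var [set v]).

Let restr (w : {ffun V -> bool}) : {ffun V1 -> bool} := [ffun u => w (val u)].

Lemma pin1_upd (D : {set V}) (P w : {ffun V -> bool}) : v \in D -> P v = q v ->
  pin G [set v] q (upd [set u : V1 | val u \in D] (restr P) (restr w)) = G (upd D P w).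
Proof.
move=> vD Pv; rewrite /pin; congr G; apply/ffunP => u.
rewrite /Defs.merge !ffunE; case: insubP => [u' _ <-|]; first by rewrite !ffunE inE.
by rewrite !inE negbK => /eqP ->; rewrite vD Pv.
Qed.

Lemma ldep_from_pinning (D : {set V}) (i j : V) :
  v \in D -> i \in D -> j \in D -> i != v -> j != v -> q i != q j ->
  (forall w, G (upd D q w) = 0) -> ldep_on G D (flip q i) (flip q j).
Proof.
move=> vD iD jD iv jv qij Z.
have flip_v k : k != v -> flip q k v = q v by move=> kv; rewrite ffunE eq_sym (negbTE kv).
have restr_flip (k : V1) : restr (flip q (val k)) = flip (restr q) k.
  by apply/ffunP => u; rewrite !ffunE val_eqE.
have restr_merge (w1 : {ffun V1 -> bool}) : w1 = restr (Defs.merge [set v] q w1).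
  by apply/ffunP => u; rewrite !ffunE valK.
have iV1 : i \in ~: [set v] by rewrite !inE.
have jV1 : j \in ~: [set v] by rewrite !inE.
have /IM_terracedP IM1 := pinned_IM.
pose D1 := [set u : V1 | val u \in D].
have Z1 w1 : pin G [set v] q (upd D1 (restr q) w1) = 0.
  by rewrite (restr_merge w1) pin1_upd.
pose i1 : V1 := Sub i iV1; pose j1 : V1 := Sub j jV1.
have iD1 : i1 \in D1 by rewrite inE.
have jD1 : j1 \in D1 by rewrite inE.
have q1 : restr q i1 != restr q j1 by rewrite !ffunE.
have [c Hc] := IM1 D1 (restr q) i1 j1 iD1 jD1 q1 Z1.
exists c; case: Hc => Hc; [left|right]=> w; rewrite -!pin1_upd ?flip_v //;
  by rewrite -[i]/(val i1) -[j]/(val j1) !restr_flip.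
Qed.
End PinOneVariable.

Arguments ldep_from_pinning {V G v q}.

Lemma lin_dep_sym {A : Type} (f g : A -> R) : lin_dep f g -> lin_dep g f.
Proof. by case=> c [H|H]; exists c; [right|left]. Qed.

Lemma two_variable_violation {V : finType} {G : {ffun V -> bool} -> R} :
  ~ IM_terraced G -> (forall v q, IM_terraced (pin G [set v] q)) ->
  exists (p : {ffun V -> bool}) (i0 j0 : V), [/\ p i0 = false, p j0 = true,
    forall w, G (upd [set i0; j0] p w) = 0 &
    ~ ldep_on G [set i0; j0] (flip p i0) (flip p j0)].
Proof.
move=> nIM pinned_IM.
have [D [p [i [j [iD jD pij Z nL]]]]] : exists (D : {set V}) (p : {ffun V -> bool}) (i j : V),
    [/\ i \in D, j \in D, p i != p j, forall w, G (upd D p w) = 0 &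
        ~ ldep_on G D (flip p i) (flip p j)].
  apply: NNPP => H; apply/nIM/IM_terracedP => D p i j iD jD pij Z.
  by apply: NNPP => nL; apply: H; exists D, p, i, j.
have DE : D = [set i; j].
  apply/setP => v; rewrite !inE; apply/idP/idP => [vD|/orP[]/eqP-> //].
  apply: NNPP => /negP; rewrite negb_or => /andP[vi vj].
  apply/nL/(ldep_from_pinning (pinned_IM v p)); by rewrite // eq_sym.
subst D; case pi: (p i); last first.
  by exists p, i, j; split=> //; move: pij; rewrite pi; case: (p j).
exists p, j, i; rewrite setUC; split=> //.
- by move: pij; rewrite pi; case: (p j).
- by move/lin_dep_sym.
Qed.

(* In a violation on {i0, j0}, the two flipped pinnings are proportional on every
   slice {x | x v = c} with v outside {i0, j0}: pin v as well and use that this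
   pinning is IM-terraced. *)
Lemma slice_minors {V : finType} {G : {ffun V -> bool} -> R} {p : {ffun V -> bool}}
  {i0 j0 : V} :
  (forall v q, IM_terraced (pin G [set v] q)) -> p i0 != p j0 ->
  (forall w, G (upd [set i0; j0] p w) = 0) ->
  forall (w u : {ffun V -> bool}) (v : V), v \notin [set i0; j0] -> w v = u v ->
  proportional (fun x => G (upd [set i0; j0] (flip p i0) x))
               (fun x => G (upd [set i0; j0] (flip p j0) x)) w u.
Proof.
move=> pinned_IM pij Z w u v vD wu.
have [vi vj] : v != i0 /\ v != j0 by move: vD; rewrite !inE negb_or => /andP.
pose P : {ffun V -> bool} := [ffun x => if x == v then w v else p x].
have on_slice (x : {ffun V -> bool}) k : x v = w v -> k != v ->
    upd (v |: [set i0; j0]) (flip P k) x = upd [set i0; j0] (flip p k) x.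
  move=> xv kv; apply/ffunP => y; rewrite !ffunE !inE.
  by case: eqP => [->|] //=; rewrite (negbTE vi) (negbTE vj) eq_sym (negbTE kv) xv.
have P_zero w' : G (upd (v |: [set i0; j0]) P w') = 0.
  rewrite -(Z [ffun x => if x == v then w v else w' x]); congr G; apply/ffunP => y.
  by rewrite !ffunE !inE; case: eqP => [->|] //=; rewrite (negbTE vi) (negbTE vj).
have Pij : P i0 != P j0 by rewrite !ffunE ![_ == v]eq_sym (negbTE vi) (negbTE vj).
have [c L] : ldep_on G (v |: [set i0; j0]) (flip P i0) (flip P j0).
  by apply: (ldep_from_pinning (pinned_IM v P)) Pij P_zero;
    rewrite ?inE ?eqxx ?orbT 1?eq_sym.
by case: L => L; rewrite /proportional -!on_slice 1?eq_sym // !L; ring.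
Qed.

Definition agree_off {V : finType} (D : {set V}) (w0 w : {ffun V -> bool}) : bool :=
  [forall v, (v \notin D) ==> (w v == w0 v)].

Definition antipode {V : finType} (w : {ffun V -> bool}) : {ffun V -> bool} :=
  [ffun v => ~~ w v].

Lemma upd_agree_off {V : finType} {D : {set V}} {w0 w : {ffun V -> bool}} (q : {ffun V -> bool}) :
  agree_off D w0 w -> upd D q w = upd D q w0.
Proof.
move=> /forallP agree; apply/ffunP => y; rewrite !ffunE; case: ifP => // yD.
by apply/eqP; have := agree y; rewrite yD.
Qed.

Section AntipodalSupport.
Variables (V : finType) (D : {set V}) (a b : {ffun V -> bool} -> R).
Hypothesis slice_prop :
  forall (w u : {ffun V -> bool}) (v : V), v \notin D -> w v = u v -> proportional a b w u.

Lemma proportional_everywhere (x w : {ffun V -> bool}) (v1 v2 : V) :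
  a w <> 0 \/ b w <> 0 -> v1 \notin D -> w v1 != x v1 -> v2 \notin D -> w v2 = x v2 ->
  forall u, proportional a b x u.
Proof.
move=> nzw v1D wx1 v2D wx2 u.
have [/existsP[v /andP[vD /eqP ux]]|] := boolP [exists v, (v \notin D) && (u v == x v)].
  exact: (slice_prop x u v vD (esym ux)).
rewrite negb_exists => /forallP /(_ v1); rewrite v1D /= => ux1.
have xw : proportional a b w x by apply: (slice_prop w x v2 v2D).
have wu : proportional a b w u.
  by apply: (slice_prop w u v1 v1D); move: wx1 ux1; case: (w v1); case: (x v1); case: (u v1).
exact: proportional_trans nzw xw wu.
Qed.

Lemma antipodal_support : ~ lin_dep a b ->
  exists w0, forall w, a w <> 0 \/ b w <> 0 ->
    agree_off D w0 w || agree_off D (antipode w0) w.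
Proof.
move=> nL.
have [x [y nxy]] : exists x y, ~ proportional a b x y.
  apply: NNPP => H; apply/nL/lin_dep_of_minors => x y.
  by apply: NNPP => nxy; apply: H; exists x, y.
have nzx : a x <> 0 \/ b x <> 0.
  apply: NNPP => /not_or_and[/NNPP ax /NNPP bx]; apply: nxy.
  by rewrite /proportional ax bx; ring.
exists x => w nzw; apply: NNPP => /negP; rewrite negb_or => /andP[].
move=> /forallPn[v1]; rewrite negb_imply => /andP[v1D wx1].
move=> /forallPn[v2]; rewrite negb_imply ffunE => /andP[v2D wx2].
have {}wx2 : w v2 = x v2 by move: wx2; case: (w v2); case: (x v2).
have all_x := proportional_everywhere x w v1 v2 nzw v1D wx1 v2D wx2.
exact/nxy/(proportional_trans nzx (all_x x) (all_x y)).
Qed.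
End AntipodalSupport.

Arguments antipodal_support {V D a b}.

Lemma ldep_on_full {V : finType} (F : {ffun V -> bool} -> R) (D : {set V})
  (p p' : {ffun V -> bool}) : (forall v, v \in D) -> ldep_on F D p p'.
Proof.
move=> fullD; have upd_full q w : upd D q w = q by apply/ffunP => v; rewrite ffunE fullD.
by apply: lin_dep_of_minors => x y; rewrite /proportional !upd_full.
Qed.

Definition antipodal_profile {V : finType} (w0 : {ffun V -> bool}) (v3 : V) (c : bool) :
  {ffun V -> bool} := if c == w0 v3 then w0 else antipode w0.

Lemma upd_on_antipodal_support {V : finType} (D : {set V}) (w0 x q : {ffun V -> bool}) (v3 : V) :
  v3 \notin D -> agree_off D w0 x || agree_off D (antipode w0) x ->
  upd D q x = upd D q (antipodal_profile w0 v3 (x v3)).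
Proof.
rewrite /antipodal_profile => v3D /orP[] agree; rewrite (upd_agree_off _ agree).
all: move/forallP: agree => /(_ v3); rewrite v3D => /eqP ->.
- by rewrite eqxx.
- by rewrite ffunE; case: (w0 v3).
Qed.

Lemma nondegenerate_of_columns {X : Type} (a b : X -> R) (S : X -> bool) (g : X -> bool)
  (T : bool -> bool -> R) : ~ lin_dep a b ->
  (forall x, a x = if S x then T (g x) true else 0) ->
  (forall x, b x = if S x then T (g x) false else 0) -> ~ degenerate T.
Proof.
move=> nL ha hb [U [U' HU]]; apply/nL/lin_dep_of_minors => x y.
by rewrite /proportional !ha !hb; case: (S x); case: (S y); rewrite ?HU; ring.
Qed.

Lemma upd_id {V : finType} (D : {set V}) (q x : {ffun V -> bool}) :
  {in D, forall v, q v = x v} -> upd D q x = x.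
Proof. by move=> qx; apply/ffunP => v; rewrite ffunE; case: ifP => // /qx. Qed.

(* The statement of the theorem before renaming the variables: i0, j0 play the roles
   of positions 1, 2 and v3 of position 3. *)
Lemma normal_form {V : finType} {G : {ffun V -> bool} -> R} :
  (forall x, 0 <= G x) -> ~ IM_terraced G -> (forall v q, IM_terraced (pin G [set v] q)) ->
  exists i0 j0 v3 : V, [/\ uniq [:: i0; j0; v3],
    (forall x : {ffun V -> bool}, x i0 = false -> x j0 = true -> G x = 0) &
    exists (w0 : {ffun V -> bool}) (T : bool -> bool -> R),
      [/\ forall c t, 0 <= T c t, ~ degenerate T &
      forall x : {ffun V -> bool}, x i0 = x j0 ->
        G x = if agree_off [set i0; j0] w0 x || agree_off [set i0; j0] (antipode w0) x
              then T (x v3) (x i0) else 0]].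
Proof.
move=> G_ge0 nIM pinned_IM.
have [p [i0 [j0 [pi0 pj0 Z nL]]]] := two_variable_violation nIM pinned_IM.
set D := [set i0; j0] in Z nL *.
have i0j0 : i0 != j0 by apply/eqP => e; move: pi0; rewrite e pj0.
pose pq (t : bool) := if t then flip p i0 else flip p j0.
have [v3 v3D] : exists v3, v3 \notin D.
  apply: NNPP => full; apply/nL/ldep_on_full => v.
  by apply: NNPP => /negP vD; apply: full; exists v.
have pij : p i0 != p j0 by rewrite pi0 pj0.
have [w0 support] := antipodal_support (slice_minors pinned_IM pij Z) nL.
pose S x := agree_off D w0 x || agree_off D (antipode w0) x.
pose T c t := G (upd D (pq t) (antipodal_profile w0 v3 c)).
have pinned_formula t x : G (upd D (pq t) x) = if S x then T (x v3) t else 0.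
  case: ifP => Sx; first by rewrite /T -upd_on_antipodal_support.
  apply: NNPP => nz; move/negP: Sx; apply; apply: support.
  by case: t nz => nz; [left|right].
exists i0, j0, v3; split.
- move: v3D; rewrite /= !inE !negb_or => /andP[v3i0 v3j0].
  by rewrite i0j0 ![_ == v3]eq_sym v3i0 v3j0.
- move=> x xi0 xj0; rewrite -(Z x) upd_id // => v.
  by rewrite !inE => /orP[]/eqP->; rewrite ?pi0 ?pj0.
exists w0, T; split=> [c t||x xij]; first exact: G_ge0.
- exact: nondegenerate_of_columns nL (pinned_formula true) (pinned_formula false).
rewrite -pinned_formula upd_id // => v; rewrite !inE /pq.
have j0i0 : (j0 == i0) = false by rewrite eq_sym (negbTE i0j0).
by case/orP=> /eqP->; rewrite -?xij; case: (x i0); rewrite !ffunE ?eqxx ?j0i0 ?(negbTE i0j0) ?pi0 ?pj0.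
Qed.

Lemma enumerate_with_prefix {V : finType} {i0 j0 v3 : V} : uniq [:: i0; j0; v3] ->
  exists (m : nat) (sigma : 'I_m.+3 -> V) (tau : V -> 'I_m.+3),
    [/\ cancel sigma tau, cancel tau sigma,
        sigma (pos1 m) = i0, sigma (pos2 m) = j0 & sigma (pos3 m) = v3].
Proof.
move=> uniq3.
pose rest := [seq v <- enum V | v \notin [:: i0; j0; v3]].
pose s := [:: i0; j0; v3] ++ rest.
have size_s : size s = (size rest).+3 by [].
have s_uniq : uniq s.
  rewrite cat_uniq uniq3 filter_uniq ?enum_uniq //= andbT.
  by apply/hasPn => v; rewrite mem_filter => /andP[].
have s_all v : v \in s by rewrite mem_cat mem_filter mem_enum andbT; case: (v \in _).
exists (size rest), (fun k => nth i0 s k), (fun v => inord (index v s)).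
have nth_index_s v : nth i0 s (inord (index v s) : 'I_(size rest).+3) = v.
  by rewrite inordK ?nth_index // -size_s index_mem.
split.
- move=> k; apply/val_inj.
  have k_lt : (k < size s)%nat by rewrite size_s ltn_ord.
  by rewrite index_uniq // inord_val.
- exact: nth_index_s.
all: by rewrite /pos1 /pos2 /pos3 inordK.
Qed.

Lemma two_le_ordinal (m : nat) (k : 'I_m.+3) :
  (2 <= k)%nat = (k \notin [set pos1 m; pos2 m]).
Proof.
by rewrite !inE /pos1 /pos2 -!val_eqE /= !inordK //; case: k => [[|[|k]] ?].
Qed.

Lemma agree_off_relabel {V : finType} {m : nat} (sigma : 'I_m.+3 -> V) (tau : V -> 'I_m.+3)
  (w : {ffun 'I_m.+3 -> bool}) (w0 : {ffun V -> bool}) (f : 'I_m.+3 -> bool) :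
  cancel sigma tau -> cancel tau sigma -> (forall k, f k = w0 (sigma k)) ->
  [forall k : 'I_m.+3, (2 <= k)%nat ==> (w k == f k)] =
  agree_off [set sigma (pos1 m); sigma (pos2 m)] w0 [ffun v => w (tau v)].
Proof.
move=> st ts f_w0.
have outside k : (sigma k \notin [set sigma (pos1 m); sigma (pos2 m)]) = (2 <= k)%nat.
  by rewrite two_le_ordinal !inE !(inj_eq (can_inj st)).
apply/forallP/forallP => agree x.
- by rewrite -(ts x) outside ffunE st -f_w0; apply: agree.
- by have := agree (sigma x); rewrite outside ffunE st f_w0.
Qed.

Theorem mainTheorem12 (V : finType) (G : {ffun V -> bool} -> R) :
  (forall x, 0 <= G x) ->
  ~ IM_terraced G ->
  (forall (D : {set V}) (p : {ffun V -> bool}), D != set0 -> IM_terraced (pin G D p)) ->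
  exists (m : nat) (sigma : 'I_m.+3 -> V) (F : {ffun 'I_m.+3 -> bool} -> R),
    bijective sigma /\
    (forall y : {ffun V -> bool}, G y = F [ffun i => y (sigma i)]) /\
    (* (a) pinning by {1 -> 0, 2 -> 1} is identically zero *)
    (forall x, pin F [set pos1 m; pos2 m] [ffun i => i == pos2 m] x = 0) /\
    (* (b) *)
    (exists (z : {ffun 'I_m.+3 -> bool}) (T : bool -> bool -> R),
       (forall a b, 0 <= T a b) /\ ~ degenerate T /\
       forall w : {ffun 'I_m.+3 -> bool}, w (pos1 m) = w (pos2 m) ->
         F w = if [forall i : 'I_m.+3, (2 <= nat_of_ord i)%nat ==> (w i == z i)]
                  || [forall i : 'I_m.+3, (2 <= nat_of_ord i)%nat ==> (w i == ~~ z i)]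
               then T (w (pos3 m)) (w (pos1 m)) else 0).
Proof.
move=> G_ge0 nIM pinned_IM.
have pinned1_IM v q : IM_terraced (pin G [set v] q).
  by apply: pinned_IM; apply/set0Pn; exists v; rewrite set11.
have [i0 [j0 [v3 [uniq3 zero [w0 [T [T_ge0 nondeg formula]]]]]]] := normal_form G_ge0 nIM pinned1_IM.
have [m [sigma [tau [st ts s1 s2 s3]]]] := enumerate_with_prefix uniq3.
have t1 : tau i0 = pos1 m by rewrite -s1 st.
have t2 : tau j0 = pos2 m by rewrite -s2 st.
exists m, sigma, (fun y => G [ffun v => y (tau v)]); split; first by exists tau.
split; first by move=> y; congr G; apply/ffunP => v; rewrite !ffunE ts.
have p12 : (pos1 m == pos2 m) = false by rewrite /pos1 /pos2 -val_eqE /= !inordK.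
split.
  by move=> x; apply: zero; rewrite ffunE ?t1 ?t2 merge_in ?ffunE ?p12 ?eqxx // !inE eqxx ?orbT.
pose z : {ffun 'I_m.+3 -> bool} := [ffun k => w0 (sigma k)].
exists z, T; do 2!split=> //.
move=> w w12.
rewrite (agree_off_relabel sigma tau w w0 (fun k => z k) st ts);
  last by move=> k; rewrite ffunE.
rewrite (agree_off_relabel sigma tau w (antipode w0) (fun k => ~~ z k) st ts);
  last by move=> k; rewrite !ffunE.
by rewrite s1 s2 formula !ffunE t1 ?t2 // -s3 st.
Qed.
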